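(* Assume (A1)–(A3) below, suppose the Wald estimands $\mathrm{Wald}_1,\dots,\mathrm{Wald}_L$ are distinct, and suppose the EGMM pseudo-true value $\beta^*_{EGMM}$ is unique. For any $\omega\in\Delta^{L-1}$ with $\omega\ne\lambda^{EGMM}$, the weighting matrix $W=\Omega_\omega^{-1}$, which achieves the floor $V_{floor}(\omega)=1/(\boldsymbol\gamma'\Omega_\omega^{-1}\boldsymbol\gamma)$, fails to deliver the target weights: $\lambda(\Omega_\omega^{-1})\ne\omega$. Consequently any positive definite $W$ with $\lambda(W)=\omega$ satisfies $V(W;\Omega_\omega)>V_{floor}(\omega)$. The target $\omega=\lambda^{EGMM}$ is the unique target for which the floor is achievable.
   Context: Observe i.i.d. $(Y_i,D_i,\mathbf Z_i)$, $Y_i\in\mathbb R$, $D_i\in\{0,1\}$, $\mathbf Z_i\in\{0,1\}^L$, $L\ge2$; potential outcomes $Y_i(0),Y_i(1)$, compliance type $D_i(\cdot):\{0,1\}^L\to\{0,1\}$, $D_i=D_i(\mathbf Z_i)$, $Y_i=D_iY_i(1)+(1-D_i)Y_i(0)$. $p_\ell=P(Z_{\ell i}=1)$, $\pi_\ell,\rho_\ell$ the differences of $\mathbb E[D_i\mid Z_{\ell i}=z]$, $\mathbb E[Y_i\mid Z_{\ell i}=z]$ between $z=1$ and $0$, $\mathrm{Wald}_\ell=\rho_\ell/\pi_\ell$, $\gamma_\ell=\mathrm{Cov}(D_i,Z_{\ell i})$, $\boldsymbol\gamma=(\gamma_\ell)_\ell$, $\Sigma_Z=\mathrm{Var}(\mathbf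 Z_i)$. $g_i(\beta)$ has entries $(Y_i-\beta D_i)(Z_{\ell i}-p_\ell)$; $\Omega(\beta)=\mathbb E[g_i(\beta)g_i(\beta)']$, taken to be positive definite. $\lambda_\ell(W)=\gamma_\ell[W\boldsymbol\gamma]_\ell/(\boldsymbol\gamma'W\boldsymbol\gamma)$; $\Delta^{L-1}$ the probability simplex in $\mathbb R^L$; $\beta^*(\omega)=\sum_\ell\omega_\ell\mathrm{Wald}_\ell$; $\Omega_\omega=\Omega(\beta^*(\omega))$; $V(W;\Omega)=\boldsymbol\gamma'W\Omega W\boldsymbol\gamma/(\boldsymbol\gamma'W\boldsymbol\gamma)^2$. The EGMM pseudo-true value $\beta^*_{EGMM}$ is a fixed point of $T(\beta)=\sum_\ell\lambda_\ell(\Omega(\beta)^{-1})\mathrm{Wald}_\ell$, and $\lambda^{EGMM}=\lambda(\Omega(\beta^*_{EGMM})^{-1})$. Assumptions: (A1) $(Y_i(0),Y_i(1),D_i(\cdot))$ independent of $\mathbf Z_i$. (A2) $D_i(z)$ nondecreasing in each coordinate for every $i$. (A3) $p_\ell>0$, $\pi_\ell>0$ for all $\ell$; $\Sigma_Z$ positive definite. *)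

From HB Require Import structures.
From mathcomp Require Import all_boot all_order all_algebra.
From mathcomp Require Import all_classical all_reals all_analysis.
Set Implicit Arguments. Unset Strict Implicit. Unset Printing Implicit Defensive.
Import Order.TTheory GRing.Theory Num.Theory.
Local Open Scope classical_set_scope.
Local Open Scope ring_scope.

(* Instruments z in {0,1}^L, compliance types D(.) : {0,1}^L -> {0,1}. *)
Definition instr (L : nat) := {ffun 'I_L -> bool}.
Definition ctype (L : nat) := {ffun instr L -> bool}.

(* Primitive random elements of the model: potential outcomes, compliance
   type, instruments. Observed D and Y are derived from them. *)
Record ivmodel (T : Type) (R : Type) (L : nat) := IVModel {
  Y0 : T -> R ;
  Y1 : T -> R ;
  Dc : T -> ctype L ;
  Zv : T -> instr L }.

Section defs.
Context {d : measure_display} {T : measurableType d} {R : realType}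
  (P : probability T R) {L : nat} (M : ivmodel T R L).

Definition Ex (X : T -> R) : R := fine ('E_P[X])%E.

Definition bR (b : bool) : R := (b : nat)%:R.

Definition Dobs (w : T) : bool := Dc M w (Zv M w).
Definition Dr (w : T) : R := bR (Dobs w).
Definition Yr (w : T) : R := if Dobs w then Y1 M w else Y0 M w.
Definition Zr (l : 'I_L) (w : T) : R := bR (Zv M w l).

Definition pz (l : 'I_L) : R := Ex (Zr l).

Definition condE (X : T -> R) (l : 'I_L) (z : bool) : R :=
  Ex (fun w => X w * bR (Zv M w l == z)) / Ex (fun w => bR (Zv M w l == z)).

Definition piz (l : 'I_L) : R := condE Dr l true - condE Dr l false.
Definition rhoz (l : 'I_L) : R := condE Yr l true - condE Yr l false.
Definition Wald (l : 'I_L) : R := rhoz l / piz l.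

Definition gam (l : 'I_L) : R := Ex (fun w => Dr w * Zr l w) - Ex Dr * pz l.
Definition gamv : 'cV[R]_L := \col_l gam l.

Definition SigmaZ : 'M[R]_L :=
  \matrix_(i, j) (Ex (fun w => Zr i w * Zr j w) - pz i * pz j).

Definition Omega (beta : R) : 'M[R]_L :=
  \matrix_(i, j) Ex (fun w => (Yr w - beta * Dr w) ^+ 2
                              * (Zr i w - pz i) * (Zr j w - pz j)).

Definition quadg (W : 'M[R]_L) : R := (gamv^T *m W *m gamv) 0 0.

Definition lam (W : 'M[R]_L) (l : 'I_L) : R :=
  gam l * (W *m gamv) l 0 / quadg W.

Definition Vasy (W Om : 'M[R]_L) : R :=
  (gamv^T *m W *m Om *m W *m gamv) 0 0 / (quadg W) ^+ 2.

Definition betastar (om : 'I_L -> R) : R := \sum_l om l * Wald l.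
Definition Omega_w (om : 'I_L -> R) : 'M[R]_L := Omega (betastar om).
Definition Vfloor (om : 'I_L -> R) : R := 1 / quadg (invmx (Omega_w om)).

Definition Tmap (beta : R) : R := \sum_l lam (invmx (Omega beta)) l * Wald l.

End defs.

Definition posdef {R : realType} {n : nat} (A : 'M[R]_n) : Prop :=
  A^T = A /\ forall v : 'cV[R]_n, v != 0 -> 0 < (v^T *m A *m v) 0 0.

Definition simplex {R : realType} {L : nat} (om : 'I_L -> R) : Prop :=
  (forall l, 0 <= om l) /\ \sum_l om l = 1.

(* (A1): (Y(0), Y(1), D(.)) independent of Z: product rule on the events
   {Y0 in A, Y1 in B, D(.) = c} x {Z = z}, A, B Borel (these rectangles form
   a pi-system generating the sigma-algebra of (Y0,Y1,D(.))). *)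
Definition A1_indep {d : measure_display} {T : measurableType d} {R : realType}
  (P : probability T R) {L : nat} (M : ivmodel T R L) : Prop :=
  forall (A B : set R) (c : ctype L) (z : instr L),
    measurable A -> measurable B ->
    P [set w | A (Y0 M w) /\ B (Y1 M w) /\ Dc M w = c /\ Zv M w = z] =
    (P [set w | A (Y0 M w) /\ B (Y1 M w) /\ Dc M w = c]
     * P [set w | Zv M w = z])%E.

Definition A2_monotone {T : Type} {R : Type} {L : nat} (M : ivmodel T R L) : Prop :=
  forall w (z z' : instr L), (forall l, z l ==> z' l) -> Dc M w z ==> Dc M w z'.

Definition A3_relevance {d : measure_display} {T : measurableType d} {R : realType}
  (P : probability T R) {L : nat} (M : ivmodel T R L) : Prop :=
  (forall l, 0 < pz P M l) /\ (forall l, 0 < piz P M l) /\ posdef (SigmaZ P M).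

Definition regular {d : measure_display} {T : measurableType d} {R : realType}
  (P : probability T R) {L : nat} (M : ivmodel T R L) : Prop :=
  measurable_fun setT (Y0 M) /\ measurable_fun setT (Y1 M) /\
  (forall c, measurable [set w | Dc M w = c]) /\
  (forall z, measurable [set w | Zv M w = z]) /\
  P.-integrable setT (fun w => ((Y0 M w) ^+ 2)%:E) /\
  P.-integrable setT (fun w => ((Y1 M w) ^+ 2)%:E).

From HB Require Import structures.
From mathcomp Require Import all_boot all_order all_algebra.
From mathcomp Require Import all_classical all_reals all_analysis.
From mathcomp Require Import ring lra.
Import Order.TTheory GRing.Theory Num.Theory.
Set Implicit Arguments. Unset Strict Implicit.
Local Open Scope ring_scope.

(* With u := W gamma and v := Omega^-1 gamma one has
   gamma' W gamma = u' Omega v, gamma' Omega^-1 gamma = v' Omega v and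
   V(W; Omega) = u' Omega u / (u' Omega v)^2, so the strict Cauchy-Schwarz
   inequality for the inner product of Omega gives V(W; Omega) > 1/(v' Omega v)
   unless u is parallel to v, i.e. unless lambda(W) = lambda(Omega^-1).
   If lambda(Omega_w^-1) = w, then beta*(w) is a fixed point of T, hence equal
   to the unique EGMM pseudo-true value, and w = lambda^EGMM. *)

Section PosdefForm.
Variables (R : realType) (n : nat).
Implicit Types (A : 'M[R]_n) (x y z : 'cV[R]_n).

Definition mxform A x y : R := (x^T *m A *m y) 0 0.

Lemma mxformBl A x y z : mxform A (x - y) z = mxform A x z - mxform A y z.
Proof. by rewrite /mxform linearB /= !mulmxBl !mxE. Qed.

Lemma mxformBr A x y z : mxform A z (x - y) = mxform A z x - mxform A z y.
Proof. by rewrite /mxform !mulmxBr !mxE. Qed.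

Lemma mxformZl A a x z : mxform A (a *: x) z = a * mxform A x z.
Proof. by rewrite /mxform linearZ /= -!scalemxAl !mxE. Qed.

Lemma mxformZr A a x z : mxform A z (a *: x) = a * mxform A z x.
Proof. by rewrite /mxform -!scalemxAr !mxE. Qed.

Lemma mxformC A x y : A^T = A -> mxform A x y = mxform A y x.
Proof.
move=> A_sym; rewrite /mxform.
transitivity ((x^T *m A *m y)^T 0 0); first by rewrite [RHS]mxE.
by rewrite !trmx_mul trmxK A_sym mulmxA.
Qed.

Lemma posdef_unitmx A : posdef A -> A \in unitmx.
Proof.
case=> _ A_pos; rewrite unitmxE unitfE; apply/negP => /det0P [v v_neq0 vA0].
have /A_pos : v^T != 0 by rewrite -(inj_eq (@trmx_inj _ _ _)) trmxK linear0.
by rewrite trmxK vA0 mul0mx mxE ltxx.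
Qed.

Lemma posdef_invmx A : posdef A -> posdef (invmx A).
Proof.
move=> A_pd; have A_unit := posdef_unitmx A_pd; case: A_pd => A_sym A_pos.
split; first by rewrite trmx_inv A_sym.
move=> v v_neq0; have Av_neq0 : invmx A *m v != 0.
  by apply: contra v_neq0 => /eqP Av0; rewrite -(mulKVmx A_unit v) Av0 mulmx0.
have := A_pos _ Av_neq0; rewrite trmx_mul trmx_inv A_sym.
by rewrite -!mulmxA (mulmxA A) mulmxV // mul1mx !mulmxA.
Qed.

Lemma posdef_Cauchy_Schwarz_lt A x y : posdef A -> y != 0 ->
  (forall t, x != t *: y) -> mxform A x y ^+ 2 < mxform A x x * mxform A y y.
Proof.
move=> [A_sym A_pos] y_neq0 x_not_par.
have yy_gt0 : 0 < mxform A y y := A_pos _ y_neq0.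
set z := mxform A y y *: x - mxform A x y *: y.
have z_neq0 : z != 0.
  apply: contraNneq (x_not_par (mxform A x y / mxform A y y)) => /eqP.
  rewrite subr_eq0 => /eqP zx; apply/eqP/(scalerI (lt0r_neq0 yy_gt0)).
  by rewrite zx scalerA mulrCA mulfV ?mulr1 // lt0r_neq0.
have := A_pos _ z_neq0; rewrite -/(mxform A z z) /z.
rewrite mxformBl !mxformBr !mxformZl !mxformZr (mxformC y x A_sym).
nra.
Qed.

End PosdefForm.

Section GMMWeights.
Context {d : measure_display} {T : measurableType d} {R : realType}
  (P : probability T R) {L : nat} (M : ivmodel T R L).
Let g := gamv P M.

Lemma quadgE W : quadg P M W = (g^T *m (W *m g)) 0 0.
Proof. by rewrite /quadg mulmxA. Qed.

(* When gamma' W gamma = 0 every lambda_l(W) is a junk 0. *)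
Lemma sum_lam W : \sum_l lam P M W l = (quadg P M W != 0)%:R.
Proof.
have -> : \sum_l lam P M W l = quadg P M W / quadg P M W.
  rewrite /lam -mulr_suml quadgE mxE; congr (_ / _).
  by apply: eq_bigr => l _; rewrite !mxE.
by have [->|q_neq0] := eqVneq (quadg P M W) 0; rewrite ?mul0r ?divff.
Qed.

Lemma lam_scale W W' (t : R) : t != 0 -> W *m g = t *: (W' *m g) ->
  lam P M W = lam P M W'.
Proof.
move=> t_neq0 Wg; apply: funext => l; rewrite /lam !quadgE -/g Wg -scalemxAr.
move: (W' *m g) => v; move: (g^T *m v) => s; rewrite !mxE invfM.
have [->|gv_neq0] := eqVneq (s 0 0) 0; first by rewrite !invr0 !mulr0.
by field; rewrite gv_neq0 t_neq0.
Qed.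

Lemma Vasy_invmx Om : Om \in unitmx ->
  Vasy P M (invmx Om) Om = 1 / quadg P M (invmx Om).
Proof.
move=> Om_unit; rewrite /Vasy -/g -[g^T *m _ *m Om]mulmxA mulVmx // mulmx1.
rewrite -/(quadg P M _); have [->|q_neq0] := eqVneq (quadg P M (invmx Om)) 0.
  by rewrite mul0r invr0 mulr0.
by rewrite expr2 invfM mulrA mulfV // div1r mul1r.
Qed.

Lemma Vasy_gt_invmx Om W : posdef Om -> W^T = W ->
  \sum_l lam P M W l = 1 -> lam P M W <> lam P M (invmx Om) ->
  1 / quadg P M (invmx Om) < Vasy P M W Om.
Proof.
move=> Om_pd W_sym sum_lam1 lam_neq.
have Om_unit := posdef_unitmx Om_pd; have [Om_sym _] := Om_pd.
have [Omi_sym _] := posdef_invmx Om_pd.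
have q_neq0 : quadg P M W != 0.
  by move: sum_lam1; rewrite sum_lam; case: eqP => // _ /eqP; rewrite eq_sym oner_eq0.
set u := W *m g; set v := invmx Om *m g.
have quad_inv : quadg P M (invmx Om) = mxform Om v v.
  by rewrite /mxform trmx_mul Omi_sym -!mulmxA (mulmxA Om) mulmxV // mul1mx !mulmxA.
have quad_W : quadg P M W = mxform Om u v.
  by rewrite /mxform trmx_mul W_sym -!mulmxA (mulmxA Om) mulmxV // mul1mx !mulmxA.
have Vasy_W : Vasy P M W Om = mxform Om u u / quadg P M W ^+ 2.
  by rewrite /Vasy /mxform trmx_mul W_sym !mulmxA.
have v_neq0 : v != 0.
  apply: contra q_neq0 => /eqP v0; rewrite quad_W -/v v0.
  by rewrite /mxform mulmx0 mxE.
have vv_gt0 : 0 < mxform Om v v by apply: (proj2 Om_pd).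
have u_not_par t : u != t *: v.
  apply/eqP => u_tv; apply: lam_neq; apply: (@lam_scale _ _ t) => //.
  by apply: contra q_neq0 => /eqP t0; rewrite quad_W u_tv mxformZl t0 mul0r.
have CS := posdef_Cauchy_Schwarz_lt Om_pd v_neq0 u_not_par.
rewrite Vasy_W quad_inv quad_W; rewrite quad_W in q_neq0.
have uv2_gt0 : 0 < mxform Om u v ^+ 2 by rewrite exprn_even_gt0.
by rewrite ltr_pdivrMr // mulrC mulrA ltr_pdivlMr // mul1r mulrC.
Qed.

Lemma Tmap_betastar_fixed om : lam P M (invmx (Omega_w P M om)) = om ->
  Tmap P M (betastar P M om) = betastar P M om.
Proof. by rewrite /Tmap /Omega_w => ->. Qed.

End GMMWeights.

Theorem proposition8 (d : measure_display) (T : measurableType d) (R : realType)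
  (P : probability T R) (L : nat) (M : ivmodel T R L)
  (HL : (2 <= L)%N)
  (Hreg : regular P M)
  (HA1 : A1_indep P M) (HA2 : A2_monotone M) (HA3 : A3_relevance P M)
  (HOmega : forall beta : R, posdef (Omega P M beta))
  (Hdistinct : injective (Wald P M))
  (bE : R) (HbE : Tmap P M bE = bE)
  (HbEuniq : forall b : R, Tmap P M b = b -> b = bE) :
  let lamE := lam P M (invmx (Omega P M bE)) in
  (forall om : 'I_L -> R, simplex om -> om <> lamE ->
     Vasy P M (invmx (Omega_w P M om)) (Omega_w P M om) = Vfloor P M om /\
     lam P M (invmx (Omega_w P M om)) <> om) /\
  (forall om : 'I_L -> R, simplex om -> om <> lamE ->
     forall W : 'M[R]_L, posdef W -> lam P M W = om ->
       Vfloor P M om < Vasy P M W (Omega_w P M om)) /\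
  (forall om : 'I_L -> R, simplex om ->
     ((exists W : 'M[R]_L, posdef W /\ lam P M W = om /\
         Vasy P M W (Omega_w P M om) = Vfloor P M om) <-> om = lamE)).
Proof.
move=> lamE.
have floor om : Vasy P M (invmx (Omega_w P M om)) (Omega_w P M om) = Vfloor P M om.
  exact/Vasy_invmx/posdef_unitmx/HOmega.
have off_target om : om <> lamE -> lam P M (invmx (Omega_w P M om)) <> om.
  move=> om_neq lam_om; apply: om_neq.
  by rewrite /lamE -(HbEuniq _ (Tmap_betastar_fixed lam_om)).
have above_floor om : simplex om -> om <> lamE -> forall W, posdef W ->
    lam P M W = om -> Vfloor P M om < Vasy P M W (Omega_w P M om).
  move=> [_ sum_om] om_neq W [W_sym _] lam_W.
  apply: Vasy_gt_invmx; rewrite ?lam_W //; first exact: HOmega.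
  by move/esym; apply: off_target.
split; [by move=> om _ om_neq; split; [apply: floor | apply: off_target] |].
split; first exact: above_floor.
move=> om om_simplex; split.
- move=> [W [W_pd [lam_W V_W]]]; apply: contrapT => om_neq.
  by have := above_floor om om_simplex om_neq W W_pd lam_W; rewrite V_W ltxx.
- have Omega_lamE : Omega_w P M lamE = Omega P M bE by rewrite /Omega_w -[in RHS]HbE.
  move=> ->; exists (invmx (Omega_w P M lamE)); rewrite Omega_lamE.
  by split; [exact/posdef_invmx/HOmega | split; rewrite // -Omega_lamE].
Qed.
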